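(* Let $c>0$ and let $k\ge 0$ be an integer. Let $G$ be a $k$-sum of graphs $G_1$ and $G_2$, where each $G_i$ has $n_i$ vertices and contains at most $cn_i^2$ cliques. Assume that $n_1\ge \frac{k^2}{2}+k$ and that $G$ has $n$ vertices. Then $G$ contains at most $cn_1^2+cn_2^2$ cliques, which is at most $cn^2$.
   Context: Graphs are simple, finite and undirected. A clique is a set of pairwise adjacent vertices (the empty set and single vertices count). $k$-sum: let $G_1,G_2$ be graphs with disjoint vertex sets and, for $i=1,2$, let $W_i\subseteq V(G_i)$ be a clique of size $k$ in $G_i$. Let $G_i'$ be obtained from $G_i$ by deleting some (possibly no) edges with both endpoints in $W_i$. For a bijection $\phi:W_1\to W_2$, a $k$-sum of $G_1$ and $G_2$ is the graph obtained from the union of $G_1'$ and $G_2'$ by identifying $w$ with $\phi(w)$ for all $w\in W_1$. *)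

From mathcomp Require Import all_boot all_order all_algebra.
Set Implicit Arguments. Unset Strict Implicit. Unset Printing Implicit Defensive.

Definition simple_graph (V : finType) (e : rel V) : Prop :=
  symmetric e /\ irreflexive e.

(* A clique: pairwise adjacent vertex set (empty set and singletons count). *)
Definition is_clique (V : finType) (e : rel V) (S : {set V}) : Prop :=
  forall x y, x \in S -> y \in S -> x != y -> e x y.

Definition is_cliqueb (V : finType) (e : rel V) (S : {set V}) : bool :=
  [forall x in S, forall y in S, (x != y) ==> e x y].

Definition num_cliques (V : finType) (e : rel V) : nat :=
  #|[set S : {set V} | is_cliqueb e S]|.

Definition deletes_inside (V : finType) (e e' : rel V) (W : {set V}) : Prop :=
  symmetric e' /\ (forall x y, e' x y -> e x y) /\
  (forall x y, ~~ ((x \in W) && (y \in W)) -> e' x y = e x y).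

(* (V, e) is (isomorphic to) a k-sum of (V1, e1) and (V2, e2): the vertex
   set V is the union of injective copies f1(V1), f2(V2), which overlap
   exactly along the identification w ~ phi w of W1 with W2, and the edges
   are the union of the (possibly edge-deleted) graphs G1', G2'. *)
Definition is_k_sum (k : nat) (V1 V2 V : finType)
    (e1 : rel V1) (e2 : rel V2) (e : rel V) : Prop :=
  exists (W1 : {set V1}) (W2 : {set V2}) (phi : V1 -> V2)
         (e1' : rel V1) (e2' : rel V2) (f1 : V1 -> V) (f2 : V2 -> V),
    [/\ #|W1| = k, #|W2| = k, is_clique e1 W1 & is_clique e2 W2] /\
    [/\ {in W1 &, injective phi}, phi @: W1 = W2,
        deletes_inside e1 e1' W1 & deletes_inside e2 e2' W2] /\
    [/\ injective f1, injective f2,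
        (forall v, (exists x, f1 x = v) \/ (exists y, f2 y = v)),
        (forall x y, f1 x = f2 y <-> (x \in W1 /\ phi x = y)) &
        (forall u v, e u v <->
           (exists x y, [/\ f1 x = u, f1 y = v & e1' x y]) \/
           (exists x y, [/\ f2 x = u, f2 y = v & e2' x y]))].

(* No edge of a k-sum joins f1(V1) \ f2(V2) to f2(V2) \ f1(V1), so every
   clique lies in the image of one side. An edge of G between two vertices of
   G_i is an edge of G_i (edges inside W_i are present in G_i because W_i is a
   clique), hence that clique pulls back to a clique of G1 or of G2.
   For the second bound, n >= n1 + n2 - k and
   (n1 + n2 - k)^2 - n1^2 - n2^2 = 2 n1 (n2 - k) - k (2 n2 - k) >= 0
   as soon as 2 n1 >= k^2 + 2k and n2 > k. *)
From mathcomp Require Import all_boot all_order all_algebra.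
From mathcomp Require Import zify ring.
Set Implicit Arguments. Unset Strict Implicit. Unset Printing Implicit Defensive.
Import Order.TTheory GRing.Theory Num.Theory.
Local Open Scope ring_scope.

Lemma cliqueP (V : finType) (e : rel V) (S : {set V}) :
  reflect (is_clique e S) (is_cliqueb e S).
Proof.
apply: (iffP forallP) => [H x y xS yS nxy | H x].
  by move: (H x); rewrite xS /= => /forallP/(_ y); rewrite yS nxy.
apply/implyP => xS; apply/forallP => y; apply/implyP => yS; apply/implyP => nxy.
exact: H.
Qed.

Section CliquesInImage.

Variables (V V' : finType) (e : rel V) (e' : rel V') (f : V' -> V).
Hypothesis f_inj : injective f.
Hypothesis f_reflect : forall x y, x != y -> e (f x) (f y) -> e' x y.

Lemma clique_preim (S : {set V}) : is_clique e S -> is_clique e' (f @^-1: S).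
Proof.
move=> clS x y; rewrite !inE => xS yS nxy; apply: (f_reflect nxy).
by apply: clS => //; apply: contra nxy => /eqP /f_inj ->.
Qed.

Lemma num_cliques_in_image :
  (#|[set S : {set V} | is_cliqueb e S & S \subset f @: setT]| <= num_cliques e')%N.
Proof.
set A := [set S | _ & _].
have sub_of_preim (S1 S2 : {set V}) :
    S1 \subset f @: setT -> f @^-1: S1 = f @^-1: S2 -> S1 \subset S2.
  move=> /subsetP sS1 E; apply/subsetP => v vS.
  have /imsetP[x _ fx] := sS1 v vS; subst v.
  have : x \in f @^-1: S1 by rewrite inE.
  by rewrite E inE.
have preim_inj : {in A &, injective (fun S : {set V} => f @^-1: S)}.
  move=> S1 S2; rewrite !inE => /andP[_ sS1] /andP[_ sS2] E.
  by apply/eqP; rewrite eqEsubset (sub_of_preim _ _ sS1 E) (sub_of_preim _ _ sS2 (esym E)).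
rewrite -(card_in_imset preim_inj) /num_cliques; apply: subset_leq_card.
apply/subsetP => T /imsetP[S]; rewrite !inE => /andP[/cliqueP clS _] ->.
exact/cliqueP/clique_preim.
Qed.

End CliquesInImage.

Lemma num_cliques_two_sides (V1 V2 V : finType) (e1 : rel V1) (e2 : rel V2)
    (e : rel V) (f1 : V1 -> V) (f2 : V2 -> V) :
  injective f1 -> injective f2 ->
  (forall x y, x != y -> e (f1 x) (f1 y) -> e1 x y) ->
  (forall x y, x != y -> e (f2 x) (f2 y) -> e2 x y) ->
  (forall S, is_clique e S -> S \subset f1 @: setT \/ S \subset f2 @: setT) ->
  (num_cliques e <= num_cliques e1 + num_cliques e2)%N.
Proof.
move=> f1_inj f2_inj refl1 refl2 one_side.
apply: leq_trans _ (leq_add (num_cliques_in_image f1_inj refl1)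
                          (num_cliques_in_image f2_inj refl2)).
apply: leq_trans _ (leq_card_setU _ _); apply/subset_leq_card/subsetP => S.
rewrite !inE => clS; rewrite clS /=.
by case: (one_side S (elimT (cliqueP e S) clS)) => ->; rewrite ?orbT.
Qed.

Section KSum.

Variables (k : nat) (V1 V2 V : finType) (e1 : rel V1) (e2 : rel V2) (e : rel V).
Hypothesis ksum : is_k_sum k e1 e2 e.

Lemma num_cliques_k_sum : (num_cliques e <= num_cliques e1 + num_cliques e2)%N.
Proof.
have [W1 [W2 [phi [e1' [e2' [f1 [f2 [[_ _ clW1 clW2]
  [[_ phiW [_ [sub1 _]] [_ [sub2 _]]] [f1_inj f2_inj cover f12 eE]]]]]]]]]] := ksum.
have in_img1 x : f1 x \in f1 @: setT by exact: imset_f.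
have in_img2 y : f2 y \in f2 @: setT by exact: imset_f.
apply: (num_cliques_two_sides f1_inj f2_inj).
- move=> x y nxy /eE[[a [b [/f1_inj -> /f1_inj -> /sub1 //]]]|[a [b [ea eb _]]]].
  by have [[xW _] [yW _]] := ((f12 x a).1 (esym ea), (f12 y b).1 (esym eb)); apply: clW1.
- move=> x y nxy /eE[[a [b [ea eb _]]]|[a [b [/f2_inj -> /f2_inj -> /sub2 //]]]].
  have [[aW ax] [bW yb]] := ((f12 a x).1 ea, (f12 b y).1 eb); subst x y.
  by apply: clW2 => //; rewrite -phiW imset_f.
move=> S clS; case: (boolP (S \subset f1 @: setT)) => [|/subsetPn[u uS un1]]; first by left.
right; apply/subsetP => v vS; apply: contraT => vn2.
have nuv : u != v.
  apply: contra un1 => /eqP ->.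
  by case: (cover v) => [[x <-] | [y ey]]; [exact: in_img1 | rewrite -ey in_img2 in vn2].
have := clS u v uS vS nuv => /eE[[x [y [ex _ _]]]|[x [y [_ ey _]]]].
  by rewrite -ex in_img1 in un1.
by rewrite -ey in_img2 in vn2.
Qed.

Lemma card_k_sum : (#|V1| + #|V2| <= #|V| + k)%N.
Proof.
have [W1 [W2 [phi [e1' [e2' [f1 [f2 [[cW1 _ _ _]
  [_ [f1_inj f2_inj _ f12 _]]]]]]]]]] := ksum.
have := cardsUI (f1 @: [set: V1]) (f2 @: [set: V2]).
rewrite !card_imset // !cardsT => <-; apply: leq_add; first exact: max_card.
rewrite -cW1 -(card_imset W1 f1_inj); apply/subset_leq_card/subsetP => v.
rewrite inE => /andP[/imsetP[x _ ->] /imsetP[y _ /f12[xW _]]].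
exact: imset_f.
Qed.

End KSum.

Lemma sqr_add_le_sqr (k n n1 n2 : nat) :
  (n1 + n2 <= n + k)%N -> (k ^ 2 + 2 * k <= 2 * n1)%N -> (k == 0)%N || (k < n2)%N ->
  (n1 ^ 2 + n2 ^ 2 <= n ^ 2)%N.
Proof. by move=> hn hk /orP[/eqP k0 | kn2]; [subst k |]; nia. Qed.

Theorem lemma10 (R : realFieldType) (c : R) (k : nat)
    (V1 V2 V : finType) (e1 : rel V1) (e2 : rel V2) (e : rel V) :
  0 < c ->
  simple_graph e1 -> simple_graph e2 ->
  is_k_sum k e1 e2 e ->
  (num_cliques e1)%:R <= c * (#|V1|%:R) ^+ 2 ->
  (num_cliques e2)%:R <= c * (#|V2|%:R) ^+ 2 ->
  (k%:R ^+ 2) / 2 + k%:R <= (#|V1|%:R : R) ->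
  (num_cliques e)%:R <= c * (#|V1|%:R) ^+ 2 + c * (#|V2|%:R) ^+ 2 /\
  (((k == 0)%N || (k < #|V2|)%N) ->
    c * (#|V1|%:R) ^+ 2 + c * (#|V2|%:R) ^+ 2 <= c * (#|V|%:R) ^+ 2).
Proof.
move=> c_gt0 _ _ ksum h1 h2 hk; split.
  apply: le_trans (lerD h1 h2).
  by rewrite -natrD ler_nat (num_cliques_k_sum ksum).
move=> k_small; rewrite -mulrDr ler_pM2l // -!natrX -natrD ler_nat.
apply: sqr_add_le_sqr (card_k_sum ksum) _ k_small.
rewrite -(ler_nat R) natrD natrX !natrM.
have -> : (k%:R ^+ 2 + 2 * k%:R : R) = 2 * (k%:R ^+ 2 / 2 + k%:R) by field.
by rewrite ler_pM2l.
Qed.
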